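(* Let $(x,y,C)\in Q(r)$ with $r\ge5$. Then $d:J\times J\to\mathbb R$, $d(j_1,j_2):=1-y_{j_1,j_2}$, is a semimetric on $J$ (i.e. $d\ge0$, $d(j,j)=0$, $d$ is symmetric, and $d(j_1,j_3)\le d(j_1,j_2)+d(j_2,j_3)$ for all $j_1,j_2,j_3\in J$).
   Context: Fix a finite set $J$ of jobs, a partial order $\prec$ on $J$, and $c,S,m\in\mathbb N$. Sherali–Adams lift: for a polytope $K=\{x\in\mathbb R^{V}:Ax\ge b\}$ on a finite index set $V$ and $r\ge0$, $SA_r(K)$ is the set of vectors $y$ indexed by subsets of $V$ of size at most $r+1$ with $y_\emptyset=1$ and, for every row $\ell$ and all $I,J'\subseteq V$ with $|I|+|J'|\le r$, $\sum_{H\subseteq J'}(-1)^{|H|}\big(\sum_{v\in V}A_{\ell,v}y_{I\cup H\cup\{v\}}-b_\ell y_{I\cup H}\big)\ge0$. Scheduling LP: let $V=J\times[m]\times\{0,\dots,S-1\}$ and let $K\subseteq\mathbb R^V$ be the set of $x$ with $\sum_{i\in[m]}\sum_{s}x_{j,i,s}=1$ for all $j\in J$, $\sum_{j\in J}x_{j,i,s}\le c$ for all $i,s$, and $0\le x_{j,i,s}\le1$. For $x\in SA_r(K)$ write $x_{j,i,s}=x_{\{(j,i,s)\}}$ and $x_{(j_1,i_1,s_1),(j_2,i_2,s_2)}=x_{\{(j_1,i_1,s_1),(j_2,i_2,s_2)\}}$. $Q(r)$ is the set of triples $(x,y,C)$ with $x\in SA_r(K)$, $y\in\mathbb R^{J\times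 J}$, $C\in\mathbb R^J$ satisfying $y_{j_1,j_2}=\sum_{s=0}^{S-1}\sum_{i\in[m]}x_{(j_1,i,s),(j_2,i,s)}$ for all $j_1,j_2\in J$, $C_{j_2}\ge C_{j_1}+(1-y_{j_1,j_2})$ for all $j_1\prec j_2$, and $C_j\ge0$ for all $j$. *)

From mathcomp Require Import all_boot all_order all_algebra.
Set Implicit Arguments. Unset Strict Implicit. Unset Printing Implicit Defensive.
Import Order.TTheory GRing.Theory Num.Theory.
Local Open Scope ring_scope.

(* Index set V = J x [m] x {0,...,S-1}; a variable is ((j, i), s). *)
Definition Vty (J : finType) (m S : nat) : finType := ((J * 'I_m) * 'I_S)%type.

(* Rows of the system A x >= b describing the scheduling polytope K.
   Equalities are written as two inequalities, "<=" constraints are negated. *)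
Inductive row (J : finType) (m S : nat) : Type :=
  | EqLo of J                       (*  sum_{i,s} x_{j,i,s} >= 1 *)
  | EqHi of J                       (* -sum_{i,s} x_{j,i,s} >= -1 *)
  | Cap of 'I_m & 'I_S              (* -sum_j x_{j,i,s} >= -c *)
  | Nonneg of Vty J m S             (*  x_v >= 0 *)
  | LeOne of Vty J m S.             (* -x_v >= -1 *)

Section Rows.
Variables (R : realFieldType) (J : finType) (c m S : nat).

Definition rowA (l : row J m S) (v : Vty J m S) : R :=
  match l with
  | EqLo j => (v.1.1 == j)%:R
  | EqHi j => - (v.1.1 == j)%:R
  | Cap i s => - ((v.1.2 == i) && (v.2 == s))%:R
  | Nonneg w => (v == w)%:R
  | LeOne w => - (v == w)%:R
  end.

Definition rowb (l : row J m S) : R :=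
  match l with
  | EqLo _ => 1
  | EqHi _ => -1
  | Cap _ _ => - c%:R
  | Nonneg _ => 0
  | LeOne _ => -1
  end.

(* A vector indexed by subsets of V of size at
   most r+1 is modelled as a function on all subsets of V; only its values on
   subsets of size <= r+1 are ever constrained/used. *)
Definition in_SA (r : nat) (x : {set Vty J m S} -> R) : Prop :=
  x set0 = 1 /\
  forall (l : row J m S) (I J' : {set Vty J m S}),
    (#|I| + #|J'| <= r)%N ->
    0 <= \sum_(H in powerset J')
            (-1) ^+ #|H| *
            ((\sum_(v : Vty J m S) rowA l v * x (I :|: H :|: [set v]))
             - rowb l * x (I :|: H)).

Definition in_Q (prec : rel J) (r : nat) (x : {set Vty J m S} -> R)
    (y : J -> J -> R) (C : J -> R) : Prop :=
  [/\ in_SA r x,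
      (forall j1 j2 : J,
          y j1 j2 = \sum_(s < S) \sum_(i < m)
                      x [set ((j1, i), s); ((j2, i), s)]),
      (forall j1 j2 : J, prec j1 j2 -> C j2 >= C j1 + (1 - y j1 j2)) &
      (forall j : J, 0 <= C j)].

End Rows.

Definition semimetric (R : realFieldType) (T : Type) (d : T -> T -> R) : Prop :=
  [/\ forall a b, 0 <= d a b,
      forall a, d a a = 0,
      forall a b, d a b = d b a &
      forall a b e, d a e <= d a b + d b e].

From Pilot Require Import Defs.
From mathcomp Require Import all_boot all_order all_algebra.
From mathcomp Require Import lra.
Set Implicit Arguments. Unset Strict Implicit. Unset Printing Implicit Defensive.
Import Order.TTheory GRing.Theory Num.Theory.
Local Open Scope ring_scope.

(* The distance d(j1, j2) = 1 - y(j1, j2) is a semimetric as soon as x lies in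
   a Sherali--Adams lift of level r >= 2 (the theorem assumes r >= 5).  The proof uses only the lifts of
   the rows x_v <= 1 and sum_{i,s} x_{j,i,s} = 1 of K:
   - lifting x_w <= 1 with J' = {} gives monotonicity x(I + w) <= x(I), and
     with J' = {a} gives supermodularity
     x(I + w) + x(I + a) <= x(I) + x(I + a + w);
   - lifting the assignment equation with I = J' = {} shows that every job
     has total single-slot mass 1.
   From these, for three variables a, u, e of one slot,
     x{a,u} + x{u,e} <= x{u} + x{a,u,e} <= x{u} + x{a,e},
   and summing over slots gives y(a,b) + y(b,e) <= 1 + y(a,e), which is the
   triangle inequality for d.  Nonnegativity, d(j,j) = 0 and symmetry come
   from monotonicity, the job mass identity and {a,b} = {b,a}. *)

Lemma sum_neg_indicator (R : pzRingType) (T : finType) (w : T) (f : T -> R) :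
  \sum_v - (v == w)%:R * f v = - f w.
Proof.
rewrite (bigD1 w) //= eqxx mulN1r big1 ?addr0 // => v /negbTE ->.
by rewrite mulNr mul0r oppr0.
Qed.

Lemma sum_job_indicator (R : pzRingType) (J : finType) (m S : nat)
    (j : J) (f : Vty J m S -> R) :
  \sum_(v : Vty J m S) (v.1.1 == j)%:R * f v = \sum_(s < S) \sum_(i < m) f (j, i, s).
Proof.
have split_pair : \sum_(v : Vty J m S) (v.1.1 == j)%:R * f v =
    \sum_(j' : J) \sum_(i < m) \sum_(s < S) (j' == j)%:R * f (j', i, s).
  by rewrite pair_bigA pair_bigA; apply: eq_bigr => -[[]].
rewrite split_pair (bigD1 j) //= [X in _ + X]big1 ?addr0 => [|j' /negbTE nj].
  rewrite exchange_big; apply: eq_bigr => s _; apply: eq_bigr => i _.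
  by rewrite eqxx mul1r.
by apply: big1 => i _; apply: big1 => s _; rewrite nj mul0r.
Qed.

Section SheraliAdamsInequalities.
Variables (R : realFieldType) (J : finType) (c m S r : nat).
Variable x : {set Vty J m S} -> R.
Hypothesis x_SA : in_SA c r x.

Lemma SA_row (l : Defs.row J m S) (I : {set Vty J m S}) : (#|I| <= r)%N ->
  rowb R c l * x I <= \sum_v rowA R l v * x (I :|: [set v]).
Proof.
move=> cardI; have := x_SA.2 l I set0; rewrite cards0 addn0 => /(_ cardI).
by rewrite powerset0 big_set1 cards0 expr0 mul1r !setU0 subr_ge0.
Qed.

Lemma SA_monotone (I : {set Vty J m S}) (w : Vty J m S) : (#|I| <= r)%N ->
  x (I :|: [set w]) <= x I.
Proof.
by move=> /(SA_row (LeOne w)); rewrite /= sum_neg_indicator mulN1r lerN2.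
Qed.

Lemma SA_supermodular (I : {set Vty J m S}) (a w : Vty J m S) : (#|I| < r)%N ->
  x (I :|: [set w]) + x (I :|: [set a]) <= x I + x (I :|: [set a] :|: [set w]).
Proof.
move=> cardI; have := x_SA.2 (LeOne w) I [set a]; rewrite cards1 addn1 => /(_ cardI).
have a_notin0 : set0 \notin [set [set a]].
  by rewrite in_set1 eq_sym; apply/eqP => /setP /(_ a); rewrite !inE eqxx.
rewrite powerset1 big_setU1 //= big_set1 cards0 cards1 expr0 expr1 !mul1r /=.
by rewrite !sum_neg_indicator !setU0 !mulN1r !opprK => ineq; lra.
Qed.

Lemma SA_job_mass (j : J) : \sum_(s < S) \sum_(i < m) x [set (j, i, s)] = 1.
Proof.
have card0 : (#|@set0 (Vty J m S)| <= r)%N by rewrite cards0.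
move: (SA_row (EqLo m S j) card0) (SA_row (EqHi m S j) card0) => /=.
rewrite x_SA.1.
under eq_bigr => v _ do rewrite set0U.
under [X in _ -> _ <= X -> _]eq_bigr => v _ do rewrite set0U mulNr.
rewrite sumrN sum_job_indicator => mass_lo mass_hi; lra.
Qed.

End SheraliAdamsInequalities.

Definition slot_overlap (R : realFieldType) (J : finType) (m S : nat)
    (x : {set Vty J m S} -> R) (j1 j2 : J) : R :=
  \sum_(s < S) \sum_(i < m) x [set (j1, i, s); (j2, i, s)].

Section SlotOverlap.
Variables (R : realFieldType) (J : finType) (c m S r : nat).
Variable x : {set Vty J m S} -> R.
Hypothesis x_SA : in_SA c r x.
Hypothesis r_ge2 : (2 <= r)%N.

Local Notation overlap := (slot_overlap x).

Lemma overlap_le1 (j1 j2 : J) : overlap j1 j2 <= 1.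
Proof.
rewrite -(SA_job_mass x_SA j1); apply: ler_sum => s _; apply: ler_sum => i _.
by apply: (SA_monotone x_SA); rewrite cards1 (leq_trans _ r_ge2).
Qed.

Lemma overlap_diag (j : J) : overlap j j = 1.
Proof.
rewrite -(SA_job_mass x_SA j); apply: eq_bigr => s _; apply: eq_bigr => i _.
by rewrite setUid.
Qed.

Lemma overlap_sym (j1 j2 : J) : overlap j1 j2 = overlap j2 j1.
Proof. by apply: eq_bigr => s _; apply: eq_bigr => i _; rewrite setUC. Qed.

(* Inside a single slot: overlapping a with u and u with e costs at most the
   mass of u plus the overlap of a with e (supermodularity at {u}, then
   monotonicity from {a,e} to {a,u,e}). *)
Lemma slot_triangle (a u e : Vty J m S) :
  x [set a; u] + x [set u; e] <= x [set u] + x [set a; e].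
Proof.
have super := SA_supermodular x_SA (I := [set u]) a e.
rewrite cards1 in super; have {super}super := super r_ge2.
have mono := SA_monotone x_SA (I := [set a; e]) u.
have {mono}mono : x ([set a; e] :|: [set u]) <= x [set a; e].
  by apply: mono; rewrite cards2 (leq_trans _ r_ge2) //; case: (a != e).
have reorder : [set u; a; e] = [set a; e] :|: [set u].
  by apply/setP => z; rewrite !inE; case: (z == u); case: (z == a); case: (z == e).
rewrite reorder in super; rewrite [[set a; u]]setUC; lra.
Qed.

Lemma overlap_triangle (a b e : J) :
  overlap a b + overlap b e <= 1 + overlap a e.
Proof.
rewrite -(SA_job_mass x_SA b) /slot_overlap -!big_split /=; apply: ler_sum => s _.
rewrite -!big_split /=; apply: ler_sum => i _; exact: slot_triangle.
Qed.

End SlotOverlap.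

Theorem mainTheorem8 (R : realFieldType) (J : finType) (prec : rel J)
    (c S m r : nat)
    (prec_irr : irreflexive prec) (prec_trans : transitive prec)
    (x : {set Vty J m S} -> R) (y : J -> J -> R) (C : J -> R) :
  (5 <= r)%N ->
  in_Q c prec r x y C ->
  semimetric (fun j1 j2 : J => 1 - y j1 j2).
Proof.
move=> r_ge5 [x_SA y_def _ _].
have r_ge2 : (2 <= r)%N by apply: leq_trans r_ge5.
have y_overlap : y =2 slot_overlap x by exact: y_def.
split=> [a b | a | a b | a b e]; rewrite ?y_overlap.
- by rewrite subr_ge0 (overlap_le1 x_SA).
- by rewrite (overlap_diag x_SA) subrr.
- by rewrite (overlap_sym x).
- by have := overlap_triangle x_SA r_ge2 a b e; lra.
Qed.
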